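(* If $\sum_{i\in I}u_i$ is defined, then for any family $(v_i)_{i\in I}$ of elements of $U$, $\sum_{i\in I}u_i\cdot v_i$ is defined.
   Context: $\mathcal A=\langle U,+,\cdot,\mathbf 0,\mathbf 1\rangle$ is a partial semiring ($\langle U,+,\mathbf 0\rangle$ a commutative monoid with $+$ possibly partial; $\langle U,\cdot,\mathbf 1\rangle$ a monoid with total $\cdot$; two-sided distributivity; $\mathbf 0$ annihilates), naturally ordered ($u\le v$ iff $\exists w.\,u+w=v$ is a partial order), Scott continuous ($+$ and $\cdot$ preserve suprema of directed sets in each argument), and has a top element $\top$ with $\top\ge u$ for all $u\in U$. For an indexed family, $\sum_{i\in I}u_i$ is the supremum of all finite sums $u_{i_1}+\dots+u_{i_n}$ over finite $\{i_1,\dots,i_n\}\subseteq I$. *)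

From Stdlib Require Import List.
Import ListNotations.

Definition obind {A B : Type} (f : A -> option B) (o : option A) : option B :=
  match o with Some a => f a | None => None end.

Section Order.
Variable U : Type.
Variable le : U -> U -> Prop.
Definition upper_bound (D : U -> Prop) (s : U) : Prop := forall d, D d -> le d s.
Definition is_sup (D : U -> Prop) (s : U) : Prop :=
  upper_bound D s /\ forall t, upper_bound D t -> le s t.
Definition directed (D : U -> Prop) : Prop :=
  (exists d, D d) /\
  forall x y, D x -> D y -> exists z, D z /\ le x z /\ le y z.
End Order.

Record PSemiring := {
  car :> Type;
  add : car -> car -> option car;
  mul : car -> car -> car;
  zero : car;
  one : car;
  (* <U,+,0> commutative (partial) monoid, Kleene-style associativity *)
  add_comm : forall a b, add a b = add b a;
  add_assoc : forall a b c,
    obind (fun ab => add ab c) (add a b) = obind (fun bc => add a bc) (add b c);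
  add_0l : forall a, add zero a = Some a;
  mul_assoc : forall a b c, mul a (mul b c) = mul (mul a b) c;
  mul_1l : forall a, mul one a = a;
  mul_1r : forall a, mul a one = a;
  mul_addr : forall c a b s, add a b = Some s -> add (mul c a) (mul c b) = Some (mul c s);
  mul_addl : forall c a b s, add a b = Some s -> add (mul a c) (mul b c) = Some (mul s c);
  mul_0l : forall a, mul zero a = zero;
  mul_0r : forall a, mul a zero = zero;
  (* natural order is a partial order (antisymmetry; refl/trans are automatic) *)
  nat_antisym : forall a b,
    (exists w, add a w = Some b) -> (exists w, add b w = Some a) -> a = b;
  (* Scott continuity: directed sets have suprema, preserved by + and . in each argument *)
  dcpo : forall D, directed _ (fun a b => exists w, add a w = Some b) D ->
    exists s, is_sup _ (fun a b => exists w, add a w = Some b) D s;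
  add_cont : forall D s a t,
    directed _ (fun a b => exists w, add a w = Some b) D ->
    is_sup _ (fun a b => exists w, add a w = Some b) D s ->
    add a s = Some t ->
    is_sup _ (fun a b => exists w, add a w = Some b)
      (fun y => exists d, D d /\ add a d = Some y) t;
  mul_contl : forall D s a,
    directed _ (fun a b => exists w, add a w = Some b) D ->
    is_sup _ (fun a b => exists w, add a w = Some b) D s ->
    is_sup _ (fun a b => exists w, add a w = Some b)
      (fun y => exists d, D d /\ y = mul a d) (mul a s);
  mul_contr : forall D s a,
    directed _ (fun a b => exists w, add a w = Some b) D ->
    is_sup _ (fun a b => exists w, add a w = Some b) D s ->
    is_sup _ (fun a b => exists w, add a w = Some b)
      (fun y => exists d, D d /\ y = mul d a) (mul s a);
  top_ex : exists t, forall u, exists w, add u w = Some t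
}.

Arguments add {_}. Arguments mul {_}. Arguments zero {_}.

Definition nle {A : PSemiring} (a b : A) : Prop := exists w, add a w = Some b.

(* finite sum u_{i1} + ... + u_{in} over a list of indices (None = undefined) *)
Fixpoint fsum {A : PSemiring} {I : Type} (u : I -> A) (l : list I) : option A :=
  match l with
  | [] => Some zero
  | i :: l' => obind (fun s => add (u i) s) (fsum u l')
  end.

Definition finite_sums {A : PSemiring} {I : Type} (u : I -> A) (x : A) : Prop :=
  exists l : list I, NoDup l /\ fsum u l = Some x.

(* \sum_{i in I} u_i is defined: every finite sum is defined, and the set of
   finite sums has a supremum (which is the value of the sum). *)
Definition sum_defined {A : PSemiring} {I : Type} (u : I -> A) : Prop :=
  (forall l : list I, NoDup l -> exists x, fsum u l = Some x) /\
  exists s, is_sup A nle (finite_sums u) s.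

(* Since u_i v_i <= u_i T for the top element T, and every finite sum of the
   u_i T is (finite sum of the u_i) T, monotonicity of partial addition makes
   every finite sum of the u_i v_i defined.  These finite sums form a directed
   set (two index sets are dominated by their union), so by Scott continuity
   they have a supremum. *)
From Stdlib Require Import List Permutation ClassicalEpsilon.
Import ListNotations.

Section NaturalOrder.
Variable A : PSemiring.

Lemma nle_trans (a b c : A) : nle a b -> nle b c -> nle a c.
Proof.
  intros [w1 H1] [w2 H2].
  pose proof (add_assoc A a w1 w2) as E.
  rewrite H1 in E; simpl in E; rewrite H2 in E.
  destruct (add w1 w2) as [w|]; simpl in E; [|discriminate].
  exists w; auto.
Qed.

Lemma nle0x (a : A) : nle zero a.
Proof. exists a; apply add_0l. Qed.

Lemma nle_mul2l (c a b : A) : nle a b -> nle (mul c a) (mul c b).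
Proof. intros [w Hw]; exists (mul c w); eapply mul_addr; eauto. Qed.

Lemma nle_add_defined (a b c t : A) : nle a b -> add b c = Some t ->
  exists s, add a c = Some s /\ nle s t.
Proof.
  intros [w Hw] H.
  pose proof (add_assoc A w a c) as E.
  rewrite (add_comm A w a), Hw in E; simpl in E; rewrite H in E.
  destruct (add a c) as [s|]; simpl in E; [|discriminate].
  exists s; split; auto.
  exists w; rewrite add_comm; auto.
Qed.

End NaturalOrder.

Section FiniteSums.
Variables (A : PSemiring) (I : Type).

Lemma fsum_nle (a b : I -> A) : (forall i, nle (a i) (b i)) ->
  forall l y, fsum b l = Some y -> exists x, fsum a l = Some x /\ nle x y.
Proof.
  intros Hab l; induction l as [|i l IH]; simpl; intros y Hy.
  - injection Hy as <-; exists zero; split; auto using nle0x.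
  - destruct (fsum b l) as [y'|]; simpl in Hy; [|discriminate].
    destruct (IH y' eq_refl) as [x [-> Hx]]; simpl.
    destruct (nle_add_defined _ _ _ _ _ (Hab i) Hy) as [s1 [H1 L1]].
    rewrite add_comm in H1.
    destruct (nle_add_defined _ _ _ _ _ Hx H1) as [s2 [H2 L2]].
    rewrite add_comm in H2.
    exists s2; split; eauto using nle_trans.
Qed.

Lemma fsum_mulr (a : I -> A) (c : A) l s : fsum a l = Some s ->
  fsum (fun i => mul (a i) c) l = Some (mul s c).
Proof.
  revert s; induction l as [|i l IH]; simpl; intros s H.
  - injection H as <-; rewrite mul_0l; auto.
  - destruct (fsum a l) as [t|]; simpl in H; [|discriminate].
    rewrite (IH t eq_refl); simpl; eapply mul_addl; eauto.
Qed.

Lemma fsum_perm (a : I -> A) l l' : Permutation l l' -> fsum a l = fsum a l'.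
Proof.
  induction 1; simpl; try congruence.
  destruct (fsum a l) as [s|]; simpl; auto.
  rewrite <- (add_assoc A (a x) (a y) s), <- (add_assoc A (a y) (a x) s), add_comm.
  reflexivity.
Qed.

Lemma fsum_app_nle (a : I -> A) l1 l2 z : fsum a (l1 ++ l2) = Some z ->
  exists x, fsum a l1 = Some x /\ nle x z.
Proof.
  revert z; induction l1 as [|i l1 IH]; simpl; intros z H.
  - exists zero; split; auto using nle0x.
  - destruct (fsum a (l1 ++ l2)) as [s|]; simpl in H; [|discriminate].
    destruct (IH s eq_refl) as [x [-> [w Hw]]]; simpl.
    pose proof (add_assoc A (a i) x w) as E.
    rewrite Hw in E; simpl in E; rewrite H in E.
    destruct (add (a i) x) as [t|]; simpl in E; [|discriminate].
    exists t; split; auto; exists w; auto.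
Qed.

Lemma NoDup_incl_Permutation_app (m l : list I) : NoDup m -> incl m l ->
  exists r, Permutation l (m ++ r).
Proof.
  revert l; induction m as [|i m IH]; intros l Hm Hml.
  - exists l; auto.
  - apply NoDup_cons_iff in Hm as [Him Hm].
    destruct (IH l Hm (proj2 (incl_cons_inv Hml))) as [r Hr].
    assert (Hir : In i r).
    { assert (H : In i (m ++ r)) by (apply (Permutation_in _ Hr), Hml; left; auto).
      apply in_app_or in H as [H|H]; tauto. }
    apply in_split in Hir as [r1 [r2 ->]].
    exists (r1 ++ r2); rewrite Hr, !app_assoc.
    apply Permutation_sym, Permutation_middle.
Qed.

Lemma fsum_incl_nle (a : I -> A) m l z : NoDup m -> incl m l ->
  fsum a l = Some z -> exists x, fsum a m = Some x /\ nle x z.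
Proof.
  intros Hm Hml Hz.
  destruct (NoDup_incl_Permutation_app m l Hm Hml) as [r Hr].
  rewrite (fsum_perm a _ _ Hr) in Hz.
  exact (fsum_app_nle a m r z Hz).
Qed.

Lemma NoDup_incl_union (l1 l2 : list I) :
  exists l, NoDup l /\ incl l1 l /\ incl l2 l.
Proof.
  set (eq_dec := fun x y : I => excluded_middle_informative (x = y)).
  exists (nodup eq_dec (l1 ++ l2)); split; [apply NoDup_nodup|].
  split; intros x Hx; apply nodup_In, in_or_app; auto.
Qed.

Definition fsums_defined (a : I -> A) : Prop :=
  forall l : list I, NoDup l -> exists x, fsum a l = Some x.

Lemma fsums_defined_nle (a b : I -> A) : (forall i, nle (a i) (b i)) ->
  fsums_defined b -> fsums_defined a.
Proof.
  intros Hab Hb l Hl.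
  destruct (Hb l Hl) as [y Hy].
  destruct (fsum_nle a b Hab l y Hy) as [x [Hx _]]; eauto.
Qed.

Lemma fsums_defined_mulr (a : I -> A) (c : A) :
  fsums_defined a -> fsums_defined (fun i => mul (a i) c).
Proof.
  intros Ha l Hl; destruct (Ha l Hl) as [s Hs].
  exists (mul s c); apply fsum_mulr, Hs.
Qed.

Lemma finite_sums_directed (a : I -> A) :
  fsums_defined a -> directed A nle (finite_sums a).
Proof.
  intros Ha; split.
  - exists zero, []; split; [constructor | reflexivity].
  - intros x y [l1 [N1 E1]] [l2 [N2 E2]].
    destruct (NoDup_incl_union l1 l2) as [l [N [I1 I2]]].
    destruct (Ha l N) as [z Hz].
    exists z; split; [exists l; auto|].
    destruct (fsum_incl_nle a l1 l z N1 I1 Hz) as [x' [Ex' Lx]].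
    destruct (fsum_incl_nle a l2 l z N2 I2 Hz) as [y' [Ey' Ly]].
    split; congruence.
Qed.

Lemma sum_definedE (a : I -> A) : sum_defined a <-> fsums_defined a.
Proof.
  split; [intros [Ha _]; exact Ha|].
  intros Ha; split; [exact Ha|].
  exact (dcpo A _ (finite_sums_directed a Ha)).
Qed.

End FiniteSums.

Theorem lemmaA2 (A : PSemiring) (I : Type) (u : I -> A) :
  sum_defined u -> forall v : I -> A, sum_defined (fun i => mul (u i) (v i)).
Proof.
  intros Hu v.
  destruct (top_ex A) as [t Ht].
  apply sum_definedE, (fsums_defined_nle A I _ (fun i => mul (u i) t)).
  - intros i; apply nle_mul2l, Ht.
  - apply fsums_defined_mulr, sum_definedE, Hu.
Qed.
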